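(* Let $u$ be a finite game with player set $\mathcal V$ and strategy profile space $\mathcal X$, and let $x^*\in\mathcal X$ be a Nash equilibrium of $u$. Then for every nonempty subset of players $\mathcal R\subseteq\mathcal V$, the projection $x^*_{\mathcal R}$ is a Nash equilibrium of every game $\tilde u\in\mathcal U_{\mathcal R}$ such that $$\|u-\tilde u\|_\infty\le\mu_u(x^* ).$$
   Context: A finite game consists of a finite nonempty player set $\mathcal V$, finite nonempty action sets $\mathcal A_i$, profile space $\mathcal X=\prod_{i\in\mathcal V}\mathcal A_i$, and utilities $u_i:\mathcal X\to\mathbb R$; $\mathcal U$ is the space of all such games, normed by $\|\delta\|_\infty=\max_{i\in\mathcal V}\max_{x\in\mathcal X}|\delta_i(x)|$. Profiles $x,y$ are $i$-comparable, $x\sim_i y$, if they coincide except possibly in entry $i$; for a game $v$, $\chi^v_i(x)=\min_{y\sim_i x,\,y\neq x}\{v_i(x)-v_i(y)\}$, and a (pure strategy) Nash equilibrium of $v$ is a profile $x^*$ with $\chi^v_i(x^* )\ge0$ for every player $i$. The margin of robustness $\mu_u(x^* )$ of a Nash equilibrium $x^*$ of $u$ is the infimum of $\|\delta\|_\infty$ over perturbations $\delta\in\mathcal U$ such that $x^*$ is not a Nash equilibrium of $u+\delta$. For nonempty $\mathcal R\subseteq\mathcal V$, $\mathcal X_{\mathcal R}=\prod_{i\in\mathcal R}\mathcal A_i$, $x_{\mathcal R}$ denotes the restriction of $x\in\mathcal X$ to the coordinates in $\mathcal R$, and $\mathcal U_{\mathcal R}$ is the set of games with player set $\mathcal R$ and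 profile space $\mathcal X_{\mathcal R}$. For $u\in\mathcal U$ and $\tilde u\in\mathcal U_{\mathcal R}$, $\|u-\tilde u\|_\infty=\max_{i\in\mathcal R}\max_{x\in\mathcal X}|u_i(x)-\tilde u_i(x_{\mathcal R})|$. *)

From HB Require Import structures.
From mathcomp Require Import all_boot all_order all_algebra.
From mathcomp Require Import classical_sets reals constructive_ereal ereal.
Set Implicit Arguments. Unset Strict Implicit.
 Unset Printing Implicit Defensive.
Import Order.TTheory GRing.Theory Num.Theory.
Local Open Scope ring_scope.
Local Open Scope classical_set_scope.

Definition profile (P : finType) (A : P -> finType) := {dffun forall i : P, A i}.

Definition game (R : realType) (P : finType) (A : P -> finType) :=
  P -> profile A -> R.

Definition icomparable (P : finType) (A : P -> finType) (i : P)
  (x y : profile A) : Prop := forall j, j != i -> x j = y j.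

(* chi^v_i(x) = min_{y ~_i x, y <> x} (v_i(x) - v_i(y)); the Nash condition
   chi^v_i(x) >= 0 for all i (min over empty set = +oo) unfolds to: *)
Definition is_Nash (R : realType) (P : finType) (A : P -> finType)
  (v : game R A) (x : profile A) : Prop :=
  forall i (y : profile A), icomparable i y x -> y != x -> v i y <= v i x.

Definition game_add (R : realType) (P : finType) (A : P -> finType)
  (u d : game R A) : game R A := fun i x => u i x + d i x.

Definition game_norm (R : realType) (P : finType) (A : P -> finType)
  (d : game R A) : R :=
  \big[Num.max/0]_(i : P) \big[Num.max/0]_(x : profile A) `|d i x|.

(* margin of robustness, as an extended real (inf of empty set = +oo) *)
Definition margin (R : realType) (P : finType) (A : P -> finType)
  (u : game R A) (x : profile A) : \bar R :=
  ereal_inf [set (game_norm d)%:E | d in [set d : game R A |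
                                             ~ is_Nash (game_add u d) x]].

Definition subP (P : finType) (Rs : {set P}) : finType := {i : P | i \in Rs}.
Arguments subP {P} Rs.

Definition subA (P : finType) (A : P -> finType) (Rs : {set P})
  : subP Rs -> finType := fun j => A (val j).
Arguments subA {P} A Rs.

Definition restrict (P : finType) (A : P -> finType) (Rs : {set P})
  (x : profile A) : profile (subA A Rs) :=
  [ffun j : subP Rs => (x (val j) : subA A Rs j)].

Definition sub_dist (R : realType) (P : finType) (A : P -> finType)
  (Rs : {set P}) (u : game R A) (ut : game R (subA A Rs)) : R :=
  \big[Num.max/0]_(i : subP Rs) \big[Num.max/0]_(x : profile A)
     `|u (val i) x - ut i (restrict Rs x)|.

(** If [x*_R] had a profitable unilateral deviation [y'] for a player [j] in
    the reduced game [ut], glue [y'] to [x*] outside [R].  Since [u] and [ut]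
    differ by at most [e = ||u - ut||] on both profiles, the loss of [j] in [u]
    from this deviation is [D < 2 e].  Yet shifting [j]'s payoff by [c] at the
    deviation and by [-c] at [x*] destroys the equilibrium as soon as
    [2 c > D], so the margin of robustness is at most [D / 2 < e]. *)
From HB Require Import structures.
From mathcomp Require Import all_boot all_order all_algebra.
From mathcomp Require Import classical_sets reals constructive_ereal ereal.
From mathcomp Require Import lra.
Import Order.TTheory GRing.Theory Num.Theory.
Local Open Scope ring_scope.

Set Implicit Arguments.
Unset Strict Implicit.
Unset Printing Implicit Defensive.

Section Robustness.
Variables (R : realType) (P : finType) (A : P -> finType).
Implicit Types (u d : game R A) (x y : profile A) (i : P) (c : R).

Lemma margin_le_game_norm u x d :
  ~ is_Nash (game_add u d) x -> (margin u x <= (game_norm d)%:E)%E.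
Proof. by move=> dN; apply: ereal_inf_lbound; exists d. Qed.

Definition deviation_bonus i y x c : game R A := fun k z =>
  if k == i then (if z == y then c else if z == x then - c else 0) else 0.

Lemma game_norm_deviation_bonus i y x c :
  0 <= c -> game_norm (deviation_bonus i y x c) <= c.
Proof.
move=> c_ge0; apply: bigmax_le => // k _; apply: bigmax_le => // z _.
rewrite /deviation_bonus; case: eqP => _; last by rewrite normr0.
case: eqP => _; first by rewrite ger0_norm.
case: eqP => _; last by rewrite normr0.
by rewrite normrN ger0_norm.
Qed.

Lemma deviation_bonus_not_Nash u i y x c :
  icomparable i y x -> y != x -> (u i x - u i y) / 2 < c ->
  ~ is_Nash (game_add u (deviation_bonus i y x c)) x.
Proof.
move=> yx y_neq_x c_gt /(_ i y yx y_neq_x).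
rewrite /game_add /deviation_bonus !eqxx eq_sym (negbTE y_neq_x).
by apply/negP; rewrite -ltNge; lra.
Qed.

Lemma margin_le_half_loss u x i y :
  is_Nash u x -> icomparable i y x -> y != x ->
  (margin u x <= ((u i x - u i y) / 2)%:E)%E.
Proof.
move=> xN yx y_neq_x; apply/lee_addgt0Pr => e e_gt0.
have loss_ge0 : 0 <= u i x - u i y by rewrite subr_ge0; exact: xN.
have c_gt : (u i x - u i y) / 2 < (u i x - u i y) / 2 + e by lra.
apply: le_trans (margin_le_game_norm (deviation_bonus_not_Nash yx y_neq_x c_gt)) _.
by rewrite lee_fin game_norm_deviation_bonus //; lra.
Qed.

End Robustness.

Section Restriction.
Variables (P : finType) (A : P -> finType) (Rs : {set P}).
Implicit Types (x : profile A) (z : profile (subA A Rs)).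

(* The [match] on [k \in Rs =P true] lets [z] be read at [exist _ k _], whose
   action set [subA A Rs (exist _ k _)] is [A k] by conversion. *)
Definition extend x z : profile A :=
  [ffun k => match (k \in Rs) =P true with
             | ReflectT kR => z (exist _ k kR)
             | ReflectF _ => x k
             end].

Lemma extend_in x z k (kR : k \in Rs) : extend x z k = z (exist _ k kR).
Proof.
rewrite ffunE; case: eqP => [kR'|]; last by rewrite kR.
by rewrite (bool_irrelevance kR' kR).
Qed.

Lemma extend_out x z k : k \notin Rs -> extend x z k = x k.
Proof. by move=> kNR; rewrite ffunE; case: eqP => // kR; rewrite kR in kNR. Qed.

Lemma restrict_extend x z : restrict Rs (extend x z) = z.
Proof. by apply/ffunP => -[k kR]; rewrite ffunE extend_in. Qed.

Lemma extend_icomparable x z j :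
  icomparable j z (restrict Rs x) -> icomparable (val j) (extend x z) x.
Proof.
move=> zx k k_neq_j; have [kR | kNR] := boolP (k \in Rs); last first.
  by rewrite extend_out.
by rewrite extend_in zx ?ffunE.
Qed.

Lemma extend_neq x z : z != restrict Rs x -> extend x z != x.
Proof. by apply: contra => /eqP <-; rewrite restrict_extend. Qed.

Lemma le_sub_dist (R : realType) (u : game R A) (ut : game R (subA A Rs))
    i x :
  `|u (val i) x - ut i (restrict Rs x)| <= sub_dist u ut.
Proof.
apply: le_trans (le_bigmax _ _ i).
exact: (le_bigmax _ (fun x => `|u (val i) x - ut i (restrict Rs x)|) x).
Qed.

End Restriction.

Theorem proposition3 (R : realType) (P : finType) (A : P -> finType)
  (hP : (0 < #|P|)%N) (hA : forall i, (0 < #|A i|)%N)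
  (u : game R A) (xs : profile A) :
  is_Nash u xs ->
  forall (Rs : {set P}), Rs != finset.set0 ->
  forall ut : game R (subA A Rs),
    ((sub_dist u ut)%:E <= margin u xs)%E ->
    is_Nash ut (restrict Rs xs).
Proof.
move=> xsN Rs _ ut dist_le_margin j z zx z_neq.
rewrite leNgt; apply/negP => gain.
set y := extend xs z.
have := margin_le_half_loss xsN (extend_icomparable zx) (extend_neq z_neq).
have := le_sub_dist u ut j xs; have := le_sub_dist u ut j y.
rewrite restrict_extend !ler_norml => /andP[? ?] /andP[? ?] margin_le.
have := le_trans dist_le_margin margin_le.
by rewrite lee_fin; apply/negP; rewrite -ltNge; lra.
Qed.
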